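(* Let $n$ be a positive integer, $k$ an integer with $0\le k\le n$, and $0<\phi<\infty$, and let $R\sim \mathrm{Spillage}(n,k,\phi)$. For integers $\ell\ge 0$ set $H_\ell = \phi^\ell\, S(n-\ell,k,\phi)/S(n,k,\phi)$. Then $$\mathbb{E}(R) = (n-k) - nH_1,\qquad \mathbb{V}(R) = nH_1 - n^2H_1^2 + n(n-1)H_2,$$ and, whenever $\mathbb{V}(R)>0$ (so that skewness and kurtosis are defined), $$\mathrm{Skew}(R) = \frac{-nH_1 + 3n^2H_1^2 - 3n(n-1)H_2 - 2n^3H_1^3 + 3n^2(n-1)H_1H_2 - n(n-1)(n-2)H_3}{[nH_1 - n^2H_1^2 + n(n-1)H_2]^{3/2}},$$ $$\mathrm{Kurt}(R) = 3 + \frac{\begin{aligned}&nH_1 - 7n^2H_1^2 + 7n(n-1)H_2 + 12n^3H_1^3 - 18n^2(n-1)H_1H_2 + 6n(n-1)(n-2)H_3\\ &- 6n^4H_1^4 + 12n^3(n-1)H_1^2H_2 - 3n^2(n-1)^2H_2^2 - 4n^2(n-1)(n-2)H_1H_3 + n(n-1)(n-2)(n-3)H_4\end{aligned}}{[nH_1 - n^2H_1^2 + n(n-1)H_2]^2}.$$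
   Context: $S(j,k)$ denotes the (central) Stirling numbers of the second kind. The noncentral Stirling numbers of the second kind are $S(n,k,\phi) = \sum_{r=0}^{n-k}\binom{n}{k+r}\phi^{n-k-r}S(k+r,k)$, with $S(n',k,\phi)=0$ for $n'<k$. The spillage distribution $\mathrm{Spillage}(n,k,\phi)$ is the distribution on $\{0,\dots,n-k\}$ with mass function $\mathrm{Spillage}(r\mid n,k,\phi) = \binom{n}{k+r}\phi^{n-k-r}S(k+r,k)/S(n,k,\phi)$. Skewness is $\mathbb{E}[(R-\mathbb{E}R)^3]/\mathbb{V}(R)^{3/2}$ and kurtosis is $\mathbb{E}[(R-\mathbb{E}R)^4]/\mathbb{V}(R)^2$. *)

From mathcomp Require Import all_boot all_order all_algebra.
Set Implicit Arguments. Unset Strict Implicit. Unset Printing Implicit Defensive.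
Import Order.TTheory GRing.Theory Num.Theory.
Local Open Scope ring_scope.

Fixpoint stirling2 (j k : nat) : nat :=
  match j, k with
  | 0, 0 => 1
  | 0, _.+1 => 0
  | _.+1, 0 => 0
  | j'.+1, k'.+1 => (k'.+1 * stirling2 j' k'.+1 + stirling2 j' k')%N
  end.

Section Spillage.
Variable R : rcfType.

Definition ncstirling (n k : nat) (phi : R) : R :=
  if (n < k)%N then 0 else
  \sum_(r < (n - k).+1) 'C(n, k + r)%:R * phi ^+ (n - k - r) * (stirling2 (k + r) k)%:R.

Definition spillage_pmf (n k : nat) (phi : R) (r : nat) : R :=
  'C(n, k + r)%:R * phi ^+ (n - k - r) * (stirling2 (k + r) k)%:R / ncstirling n k phi.

Definition spill_E (n k : nat) (phi : R) (g : nat -> R) : R :=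
  \sum_(r < (n - k).+1) g r * spillage_pmf n k phi r.

Definition spill_mean n k phi : R := spill_E n k phi (fun r => r%:R).
Definition spill_cmoment n k phi (m : nat) : R :=
  spill_E n k phi (fun r => (r%:R - spill_mean n k phi) ^+ m).
Definition spill_var n k phi : R := spill_cmoment n k phi 2.
(* V^{3/2} written as (sqrt V)^3 *)
Definition spill_skew n k phi : R :=
  spill_cmoment n k phi 3 / (Num.sqrt (spill_var n k phi)) ^+ 3.
Definition spill_kurt n k phi : R :=
  spill_cmoment n k phi 4 / (spill_var n k phi) ^+ 2.

(* H_l = phi^l S(n-l,k,phi)/S(n,k,phi); S(n-l,k,phi) = 0 when n - l < 0 (as integers). *)
Definition spill_H (n k : nat) (phi : R) (l : nat) : R :=
  if (l <= n)%N then phi ^+ l * ncstirling (n - l) k phi / ncstirling n k phi else 0.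

End Spillage.

From mathcomp Require Import all_boot all_order all_algebra.
From mathcomp Require Import zify ring.
Set Implicit Arguments. Unset Strict Implicit. Unset Printing Implicit Defensive.
Import Order.TTheory GRing.Theory Num.Theory.
Local Open Scope ring_scope.

(* Write R = (n - k) - X.  Since C(n, k + r) (n - k - r)_l = (n)_l C(n - l, k + r),
   the l-th factorial moment sum of X is (n)_l phi^l S(n - l, k, phi), that is
   E[(X)_l] = (n)_l H_l.  As R - E R = E X - X, every central moment of R is the
   expectation of a polynomial in X, hence a combination of the H_l. *)

Lemma mul_bin_ffact_sub (n j l : nat) :
  ('C(n, j) * (n - j) ^_ l = n ^_ l * 'C(n - l, j))%N.
Proof.
elim: l => [|l IH]; first by rewrite ffactn0 muln1 mul1n subn0.
rewrite ffactnSr mulnA IH ffactnSr -!mulnA; congr (_ * _)%N.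
have -> : (n - j - l = n - l - j)%N by lia.
by rewrite mulnC -mul_bin_down subnS.
Qed.

Fixpoint ffactr {R : pzRingType} (x : R) (l : nat) : R :=
  if l is l'.+1 then x * ffactr (x - 1) l' else 1.

Lemma natr_ffact (R : pzRingType) (m l : nat) : (m ^_ l)%:R = ffactr (m%:R : R) l.
Proof.
elim: l m => [|l IH] [|m] //=.
- by rewrite ffact0n mul0r.
- by rewrite ffactSS natrM IH -natr1 addrK.
Qed.

Lemma stirling2_small (j k : nat) : (j < k)%N -> stirling2 j k = 0%N.
Proof. by elim: j k => [|j IH] [|k] //= ltjk; rewrite !IH ?muln0 //; lia. Qed.

Lemma stirling2nn (k : nat) : stirling2 k k = 1%N.
Proof. by elim: k => [|k IH] //=; rewrite stirling2_small // muln0 IH. Qed.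

Lemma ncstirling_gt0 (R : rcfType) (n k : nat) (phi : R) :
  (k <= n)%N -> 0 < phi -> 0 < ncstirling n k phi.
Proof.
move=> kn phi_gt0; rewrite /ncstirling ltnNge kn /=.
rewrite big_ord_recl /= addn0 subn0 stirling2nn mulr1 ltr_wpDr //.
  apply: sumr_ge0 => i _.
  by rewrite !mulr_ge0 ?exprn_ge0 ?ler0n ?ltW.
by rewrite mulr_gt0 ?exprn_gt0 // ltr0n bin_gt0.
Qed.

Section SpillageMoments.
Variables (R : rcfType) (n k : nat) (phi : R).
Hypothesis kn : (k <= n)%N.

Local Notation E := (spill_E n k phi).
Local Notation H := (spill_H n k phi).
Local Notation N := (n%:R : R).

Definition spill_weight (r : nat) : R :=
  'C(n, k + r)%:R * phi ^+ (n - k - r) * (stirling2 (k + r) k)%:R.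

Lemma spill_E_eq (g h : nat -> R) :
  (forall r, (r <= n - k)%N -> g r = h r) -> E g = E h.
Proof.
move=> eq_gh; apply: eq_bigr => r _; rewrite eq_gh //.
by rewrite -ltnS ltn_ord.
Qed.

Lemma spill_E_sum (L : nat) (c : nat -> R) (f : nat -> nat -> R) :
  E (fun r => \sum_(l < L) c l * f l r) = \sum_(l < L) c l * E (f l).
Proof.
rewrite /spill_E; under eq_bigr do rewrite mulr_suml.
rewrite exchange_big /=; apply: eq_bigr => l _.
by rewrite mulr_sumr; apply: eq_bigr => r _; rewrite mulrA.
Qed.

Lemma sum_ffact_spill_weight (l : nat) :
  \sum_(r < (n - k).+1) ffactr ((n - k - r)%:R : R) l * spill_weight r
  = (n ^_ l)%:R * phi ^+ l * ncstirling (n - l) k phi.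
Proof.
have shift r : ffactr ((n - k - r)%:R : R) l * spill_weight r
    = (n ^_ l * 'C(n - l, k + r))%:R * phi ^+ (n - k - r) * (stirling2 (k + r) k)%:R.
  by rewrite -natr_ffact -mul_bin_ffact_sub subnDA natrM !mulrA [_ * 'C(_, _)%:R]mulrC.
under eq_bigr do rewrite shift.
(* (n)_l C(n - l, k + r) vanishes unless l + k + r <= n. *)
have [lkn | nlk] := leqP (l + k) n; last first.
  rewrite big1 => [|r _]; last first.
    case: (leqP l n) => ln; last by rewrite ffact_small ?mul0n ?mul0r.
    by rewrite bin_small ?muln0 ?mul0r //; lia.
  case: (leqP l n) => ln; last by rewrite ffact_small // !mul0r.
  by rewrite /ncstirling ifT ?mulr0 //; lia.
rewrite /ncstirling ifF; last by apply/negbTE; lia.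
rewrite -(big_mkord xpredT (fun r => (n ^_ l * 'C(n - l, k + r))%:R
  * phi ^+ (n - k - r) * (stirling2 (k + r) k)%:R)).
rewrite (big_cat_nat _ (n := (n - l - k).+1)) //=; last by lia.
rewrite [X in _ + X]big1_seq ?addr0 => [|r]; last first.
  by rewrite mem_index_iota => /andP[? ?]; rewrite bin_small ?muln0 ?mul0r //; lia.
rewrite big_mkord mulr_sumr; apply: eq_bigr => r _.
have -> : (n - k - r = l + (n - l - k - r))%N by have := ltn_ord r; lia.
by rewrite natrM exprD; ring.
Qed.

Lemma spill_E_ffact (l : nat) :
  E (fun r => ffactr ((n - k - r)%:R : R) l) = ffactr N l * H l.
Proof.
rewrite /spill_E /spillage_pmf.
under eq_bigr do rewrite mulrA.
rewrite -mulr_suml sum_ffact_spill_weight /spill_H -natr_ffact.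
have [ln | nl] := leqP l n; first by rewrite !mulrA.
by rewrite ffact_small // !mul0r.
Qed.

Lemma spill_E_ffact_poly (p : R -> R) (L : nat) (c : nat -> R) :
  (forall x, p x = \sum_(l < L) c l * ffactr x l) ->
  E (fun r => p (n - k - r)%:R) = \sum_(l < L) c l * ffactr N l * H l.
Proof.
move=> pE.
transitivity (E (fun r => \sum_(l < L) c l * ffactr ((n - k - r)%:R : R) l)).
  by apply: spill_E_eq => r _; exact: pE.
rewrite (spill_E_sum L c (fun l r => ffactr ((n - k - r)%:R : R) l)).
by apply: eq_bigr => l _; rewrite spill_E_ffact mulrA.
Qed.

Hypothesis phi_gt0 : 0 < phi.

Lemma spill_H0 : H 0 = 1.
Proof. by rewrite /spill_H /= mul1r subn0 divff // gt_eqF // ncstirling_gt0. Qed.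

Lemma spill_meanE : spill_mean n k phi = (n - k)%:R - N * H 1.
Proof.
rewrite /spill_mean (@spill_E_eq _ (fun r => (n - k)%:R - (n - k - r)%:R)) => [|r le_r].
  rewrite (@spill_E_ffact_poly (fun x => (n - k)%:R - x) 2 (nth 0 [:: (n - k)%:R; -1])).
    by rewrite !big_ord_recr big_ord0 /= spill_H0; ring.
  by move=> x; rewrite !big_ord_recr big_ord0 /=; ring.
by rewrite (natrB _ le_r); ring.
Qed.

Lemma spill_cmomentE (j : nat) :
  spill_cmoment n k phi j = E (fun r => (N * H 1 - (n - k - r)%:R) ^+ j).
Proof.
apply: spill_E_eq => r le_r.
by rewrite spill_meanE (natrB _ le_r); congr (_ ^+ _); ring.
Qed.

Lemma spill_cmoment_ffact (j L : nat) (c : nat -> R) :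
  (forall x, (N * H 1 - x) ^+ j = \sum_(l < L) c l * ffactr x l) ->
  spill_cmoment n k phi j = \sum_(l < L) c l * ffactr N l * H l.
Proof. by rewrite spill_cmomentE; apply: spill_E_ffact_poly. Qed.

Local Notation D := (N * H 1 - N ^+ 2 * H 1 ^+ 2 + N * (N - 1) * H 2).

(* The coefficients are those of (c - x)^j in the basis (x)_l, using
   x^2 = (x)_2 + (x)_1, x^3 = (x)_3 + 3(x)_2 + (x)_1 and
   x^4 = (x)_4 + 6(x)_3 + 7(x)_2 + (x)_1. *)
Lemma spill_varE : spill_var n k phi = D.
Proof.
pose c := N * H 1.
rewrite /spill_var (@spill_cmoment_ffact 2 3 (nth 0 [:: c ^+ 2; 1 - 2 * c; 1])).
  by rewrite !big_ord_recr big_ord0 /= spill_H0 /c; ring.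
by move=> x; rewrite !big_ord_recr big_ord0 /= /c; ring.
Qed.

Lemma spill_cmoment3E :
  spill_cmoment n k phi 3 =
    - N * H 1 + 3 * N ^+ 2 * H 1 ^+ 2 - 3 * N * (N - 1) * H 2
    - 2 * N ^+ 3 * H 1 ^+ 3 + 3 * N ^+ 2 * (N - 1) * H 1 * H 2
    - N * (N - 1) * (N - 2) * H 3.
Proof.
pose c := N * H 1.
rewrite (@spill_cmoment_ffact 3 4
  (nth 0 [:: c ^+ 3; - 3 * c ^+ 2 + 3 * c - 1; 3 * c - 3; -1])).
  by rewrite !big_ord_recr big_ord0 /= spill_H0 /c; ring.
by move=> x; rewrite !big_ord_recr big_ord0 /= /c; ring.
Qed.

Lemma spill_cmoment4E :
  spill_cmoment n k phi 4 =
    3 * D ^+ 2 +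
    (N * H 1 - 7 * N ^+ 2 * H 1 ^+ 2 + 7 * N * (N - 1) * H 2
     + 12 * N ^+ 3 * H 1 ^+ 3 - 18 * N ^+ 2 * (N - 1) * H 1 * H 2
     + 6 * N * (N - 1) * (N - 2) * H 3
     - 6 * N ^+ 4 * H 1 ^+ 4 + 12 * N ^+ 3 * (N - 1) * H 1 ^+ 2 * H 2
     - 3 * N ^+ 2 * (N - 1) ^+ 2 * H 2 ^+ 2
     - 4 * N ^+ 2 * (N - 1) * (N - 2) * H 1 * H 3
     + N * (N - 1) * (N - 2) * (N - 3) * H 4).
Proof.
pose c := N * H 1.
rewrite (@spill_cmoment_ffact 4 5 (nth 0 [:: c ^+ 4;
  - 4 * c ^+ 3 + 6 * c ^+ 2 - 4 * c + 1; 6 * c ^+ 2 - 12 * c + 7; - 4 * c + 6; 1])).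
  by rewrite !big_ord_recr big_ord0 /= spill_H0 /c; ring.
by move=> x; rewrite !big_ord_recr big_ord0 /= /c; ring.
Qed.

End SpillageMoments.

Theorem theorem2 (R : rcfType) (n k : nat) (phi : R)
    (hn : (0 < n)%N) (hk : (k <= n)%N) (hphi : 0 < phi) :
  let H := spill_H n k phi in
  let N := (n%:R : R) in
  let D := N * H 1%N - N ^+ 2 * H 1%N ^+ 2 + N * (N - 1) * H 2%N in
  spill_mean n k phi = (n - k)%:R - N * H 1%N /\
  spill_var n k phi = D /\
  (0 < spill_var n k phi ->
   spill_skew n k phi =
     (- N * H 1%N + 3 * N ^+ 2 * H 1%N ^+ 2 - 3 * N * (N - 1) * H 2%N
      - 2 * N ^+ 3 * H 1%N ^+ 3 + 3 * N ^+ 2 * (N - 1) * H 1%N * H 2%N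
      - N * (N - 1) * (N - 2) * H 3%N) / (Num.sqrt D) ^+ 3 /\
   spill_kurt n k phi =
     3 + (N * H 1%N - 7 * N ^+ 2 * H 1%N ^+ 2 + 7 * N * (N - 1) * H 2%N
          + 12 * N ^+ 3 * H 1%N ^+ 3 - 18 * N ^+ 2 * (N - 1) * H 1%N * H 2%N
          + 6 * N * (N - 1) * (N - 2) * H 3%N
          - 6 * N ^+ 4 * H 1%N ^+ 4 + 12 * N ^+ 3 * (N - 1) * H 1%N ^+ 2 * H 2%N
          - 3 * N ^+ 2 * (N - 1) ^+ 2 * H 2%N ^+ 2
          - 4 * N ^+ 2 * (N - 1) * (N - 2) * H 1%N * H 3%N
          + N * (N - 1) * (N - 2) * (N - 3) * H 4%N) / D ^+ 2).
Proof.
move=> H N D.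
have varE : spill_var n k phi = D := spill_varE hk hphi.
split; first exact: spill_meanE.
split=> // var_gt0; split; first by rewrite /spill_skew spill_cmoment3E // varE.
have D_neq0 : D != 0 by rewrite -varE gt_eqF.
by rewrite /spill_kurt spill_cmoment4E // varE mulrDl mulfK ?expf_neq0.
Qed.
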